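(* Let $G$ be a graph of order $n$ with adjacency eigenvalues $\lambda_1(G)\ge\cdots\ge\lambda_n(G)$ and negative inertia $\nu^-=\nu^-(G)$. Let $F$ be a clique partition of $G$ and let $t_i^F$ be the $i$th largest clique-degree of $G$ with respect to $F$. Then for $1\le i\le\nu^-$, $$\lambda_{n-i+1}(G)\ge -t_i^F.$$ Equality holds if $G$ is clique-regular with respect to $F$ and $\nu^-=n-|F|$.
   Context: All graphs are finite and simple. A clique partition of $G$ is a set $F$ of cliques (sets of pairwise adjacent vertices) such that every edge lies in exactly one clique of $F$. The clique-degree of a vertex is the number of cliques of $F$ containing it; $t_1^F\ge\cdots\ge t_n^F$ are the clique-degrees in non-increasing order. $G$ is clique-regular with respect to $F$ if all clique-degrees are equal. $\nu^-(G)$ is the number of negative adjacency eigenvalues. *)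

From mathcomp Require Import all_boot all_order all_algebra.
Set Implicit Arguments. Unset Strict Implicit. Unset Printing Implicit Defensive.
Import Order.TTheory GRing.Theory Num.Theory.
Local Open Scope ring_scope.

Definition simple_graph (n : nat) (e : rel 'I_n) : Prop :=
  (forall u v, e u v = e v u) /\ (forall u, ~~ e u u).

Definition adjmx (R : pzRingType) (n : nat) (e : rel 'I_n) : 'M[R]_n :=
  \matrix_(i, j) (e i j)%:R.

Definition is_clique (n : nat) (e : rel 'I_n) (C : {set 'I_n}) : Prop :=
  forall u v, u \in C -> v \in C -> u != v -> e u v.

Definition clique_partition (n : nat) (e : rel 'I_n) (F : {set {set 'I_n}}) : Prop :=
  (forall C, C \in F -> is_clique e C) /\
  (forall u v, e u v -> exists! C, [/\ C \in F, u \in C & v \in C]).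

Definition clique_deg (n : nat) (F : {set {set 'I_n}}) (v : 'I_n) : nat :=
  #|[set C in F | v \in C]|.

(* Clique-degrees in non-increasing order: t_i^F = nth 0 (clique_degs F) (i-1). *)
Definition clique_degs (n : nat) (F : {set {set 'I_n}}) : seq nat :=
  sort geq [seq clique_deg F v | v <- enum 'I_n].

Definition clique_regular (n : nat) (F : {set {set 'I_n}}) : Prop :=
  forall u v : 'I_n, clique_deg F u = clique_deg F v.

(* s is the list of eigenvalues of A (with multiplicity), in non-increasing
   order: lambda_k = nth 0 s (k-1). *)
Definition sorted_spectrum (R : numFieldType) (n : nat) (A : 'M[R]_n) (s : seq R) : Prop :=
  [/\ size s = n, char_poly A = \prod_(x <- s) ('X - x%:P) & sorted >=%R s].

Definition neg_inertia (R : numFieldType) (s : seq R) : nat := count (fun x => x < 0) s.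

From mathcomp Require Import all_boot all_order all_algebra.
From mathcomp Require Import sesquilinear spectral complex zify.
Import Order.TTheory GRing.Theory Num.Theory.
Set Implicit Arguments. Unset Strict Implicit. Unset Printing Implicit Defensive.
Local Open Scope ring_scope.

(* A clique partition F writes the adjacency matrix as A = M M^T - D, with M the
   vertex-clique incidence matrix and D the diagonal matrix of clique-degrees, so
   the Hermitian form of A + cI is
     v |-> sum_(K in F) |<v, 1_K>|^2 + sum_u (c - deg u) |v_u|^2.
   For c = t_i this form is nonnegative on the vectors supported by the at least
   n - i + 1 vertices of clique-degree <= t_i; by the min-max principle at most
   i - 1 eigenvalues of A lie below -t_i, i.e. lambda_(n-i+1) >= -t_i.
   If every clique-degree equals t, the form of A + tI vanishes on the vectors
   orthogonal to the |F| = n - nu^- vectors 1_K, so at most n - nu^- eigenvalues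
   exceed -t and lambda_(n-i+1) <= -t for i <= nu^-. *)

Lemma sorted_count_ge_nth (T : Type) (r : rel T) (x0 : T) (s : seq T) (k : nat) :
  transitive r -> reflexive r -> sorted r s ->
  (size s - k <= count (r (nth x0 s k)) s)%N.
Proof.
move=> r_tr r_refl s_sorted; set x := nth x0 s k.
have count_drop : count (r x) (drop k s) = size (drop k s).
  apply/eqP; rewrite -all_count; apply/(all_nthP x0) => i; rewrite size_drop nth_drop => lt_i.
  by apply: sorted_leq_nth => //; rewrite ?inE /=; lia.
by rewrite -size_drop -count_drop -{2}(cat_take_drop k s) count_cat leq_addl.
Qed.

Lemma sorted_count_le_nth (T : Type) (r : rel T) (x0 : T) (s : seq T) (k : nat) :
  transitive r -> reflexive r -> sorted r s -> (k < size s)%N ->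
  (k.+1 <= count (r^~ (nth x0 s k)) s)%N.
Proof.
move=> r_tr r_refl s_sorted lt_k; set x := nth x0 s k.
have count_take : count (r^~ x) (take k.+1 s) = size (take k.+1 s).
  apply/eqP; rewrite -all_count; apply/(all_nthP x0) => i; rewrite size_takel // => lt_i.
  by rewrite nth_take //; apply: sorted_leq_nth => //; rewrite ?inE /=; lia.
by rewrite -(size_takel lt_k) -count_take -{2}(cat_take_drop k.+1 s) count_cat leq_addr.
Qed.

Lemma card_set_count (T : finType) (Q : pred T) : #|[set x | Q x]| = count Q (enum T).
Proof. by rewrite -sum1_count -sum1_card big_enum_cond; apply: eq_bigl => x; rewrite inE. Qed.

Lemma char_poly_conj (K : comUnitRingType) n (P A : 'M[K]_n) :
  P \in unitmx -> char_poly (invmx P *m A *m P) = char_poly A.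
Proof.
move=> P_unit; rewrite /char_poly /char_poly_mx.
have P'P : map_mx polyC (invmx P) *m map_mx polyC P = 1%:M.
  by rewrite -map_mxM mulVmx // map_mx1.
have -> : 'X%:M - map_mx polyC (invmx P *m A *m P) =
    map_mx polyC (invmx P) *m ('X%:M - map_mx polyC A) *m map_mx polyC P.
  by rewrite mulmxBr mulmxBl mul_mx_scalar -scalemxAl P'P scalemx1 !map_mxM.
by rewrite !det_mulmx mulrAC -det_mulmx P'P det1 mul1r.
Qed.

Lemma char_poly_map_spectrum (R S : comNzRingType) (f : {rmorphism R -> S}) n
    (A : 'M[R]_n) (s : seq R) :
  char_poly A = \prod_(x <- s) ('X - x%:P) ->
  char_poly (map_mx f A) = \prod_(x <- map f s) ('X - x%:P).
Proof.
move=> char_s; rewrite -map_char_poly char_s rmorph_prod big_map.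
by apply: eq_bigr => x _; rewrite rmorphB /= map_polyX map_polyC.
Qed.

Lemma exists_nonzero_annihilator (K : fieldType) n (cs : seq 'cV[K]_n) :
  (size cs < n)%N -> exists2 v : 'rV_n, v != 0 & forall c, c \in cs -> v *m c = 0.
Proof.
move=> lt_cs_n.
pose M := \matrix_(i < n, k < size cs) cs`_k i 0.
have /rowV0Pn[v] : kermx M != 0.
  by rewrite -mxrank_eq0 mxrank_ker subn_eq0 -ltnNge (leq_ltn_trans (rank_leq_col M)).
rewrite sub_kermx => /eqP vM v_neq0; exists v => // _ /(nthP 0)[k lt_k <-].
have -> : cs`_k = col (Ordinal lt_k) M by apply/colP => i; rewrite !mxE.
by rewrite colE mulmxA vM mul0mx.
Qed.

Section Spectral.
Variable C : numClosedFieldType.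
Local Open Scope sesquilinear_scope.

Lemma dotmx_mulmxl m n (u : 'rV[C]_m) (M : 'M[C]_(m, n)) (v : 'rV[C]_n) :
  dotmx (u *m M) v = dotmx u (v *m M^t*).
Proof. by rewrite !dotmxE trmx_mul map_mxM trmxCK mulmxA. Qed.

Lemma dotmx_rV1 (a : 'rV[C]_1) : dotmx a a = `|a 0 0| ^+ 2.
Proof. by rewrite dotmxE mxE big_ord1 !mxE normCK. Qed.

Lemma dotmx_diag n (r v : 'rV[C]_n) :
  dotmx (v *m diag_mx r) v = \sum_j r 0 j * `|v 0 j| ^+ 2.
Proof.
by rewrite dotmxE mul_mx_diag mxE; apply: eq_bigr => j _; rewrite !mxE normCK mulrCA mulrA.
Qed.

Lemma dotmx_spectral n (P : 'M[C]_n) (d v : 'rV[C]_n) : P \is unitarymx ->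
  dotmx (v *m (invmx P *m diag_mx d *m P)) v =
  \sum_j d 0 j * `|(v *m P^t*) 0 j| ^+ 2.
Proof.
by move=> P_unitary; rewrite invmx_unitary // !mulmxA dotmx_mulmxl dotmx_diag.
Qed.

Lemma spectral_addmx_scalar n (P : 'M[C]_n) (d : 'rV[C]_n) (c : C) : P \in unitmx ->
  invmx P *m diag_mx d *m P + c%:M = invmx P *m diag_mx (d + const_mx c) *m P.
Proof.
move=> P_unit; rewrite linearD /= diag_const_mx mulmxDr mulmxDl.
by rewrite mul_mx_scalar -scalemxAl mulVmx // scalemx1.
Qed.

Lemma sum_weighted_sqr_gt0 (I : finType) (a w : I -> C) :
  (forall j, w j != 0 -> 0 < a j) -> (exists j, w j != 0) ->
  0 < \sum_j a j * `|w j| ^+ 2.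
Proof.
move=> a_gt0 [j0 wj0]; rewrite lt_def psumr_neq0 => [|j _]; last first.
  have [->|/a_gt0/ltW] := eqVneq (w j) 0; first by rewrite normr0 expr0n mulr0.
  by move=> a_ge0; rewrite mulr_ge0 // exprn_ge0.
rewrite andbC sumr_ge0 => [|j _]; last first.
  have [->|/a_gt0/ltW] := eqVneq (w j) 0; first by rewrite normr0 expr0n mulr0.
  by move=> a_ge0; rewrite mulr_ge0 // exprn_ge0.
apply/hasP; exists j0; first exact: mem_index_enum.
by rewrite mulr_gt0 ?a_gt0 // exprn_gt0 // normr_gt0.
Qed.

Lemma exists_annihilator_in_eigenspan n (P : 'M[C]_n) (J : {set 'I_n}) (cs : seq 'cV[C]_n) :
  P \is unitarymx -> (#|~: J| + size cs < n)%N ->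
  exists v : 'rV_n, [/\ forall x, x \in cs -> v *m x = 0,
    forall j, j \notin J -> (v *m P^t*) 0 j = 0 & exists j, (v *m P^t*) 0 j != 0].
Proof.
move=> P_unitary lt_n.
have [|v v_neq0 v_ann] :=
  @exists_nonzero_annihilator _ _ ([seq col j (P^t*) | j <- enum (~: J)] ++ cs).
  by rewrite size_cat size_map -cardE.
exists v; split=> [x x_cs|j j_J|].
- by apply: v_ann; rewrite mem_cat x_cs orbT.
- have /matrixP/(_ 0 0) : v *m col j (P^t*) = 0.
    by apply: v_ann; rewrite mem_cat; apply/orP; left; apply: map_f; rewrite mem_enum inE.
  by rewrite [RHS]mxE => <-; rewrite !mxE; apply: eq_bigr => i _; rewrite !mxE.
- have [j wj|w_eq0] := pickP (fun j => (v *m P^t*) 0 j != 0); first by exists j.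
  have w0 : v *m P^t* = 0.
    by apply/rowP => j; rewrite [RHS]mxE; apply/eqP/negbFE/w_eq0.
  by move: v_neq0; rewrite -(mulmxKtV v P_unitary erefl) w0 mul0mx eqxx.
Qed.

Lemma card_eig_lt_le n (P : 'M[C]_n) (d : 'rV[C]_n) (c : C) (cs : seq 'cV[C]_n) :
  P \is unitarymx ->
  (forall v, (forall x, x \in cs -> v *m x = 0) ->
     0 <= dotmx (v *m (invmx P *m diag_mx d *m P + c%:M)) v) ->
  (#|[set j | (d 0 j < - c)%R]| <= size cs)%N.
Proof.
move=> P_unitary form_ge0; set J := [set j | d 0 j < - c].
rewrite leqNgt; apply/negP => lt_cs_J.
have [|v [v_cs v_J w_neq0]] := exists_annihilator_in_eigenspan (J := J) (cs := cs) P_unitary.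
  by rewrite -[n in (_ < n)%N]card_ord -(cardsC J) addnC ltn_add2r.
have := form_ge0 v v_cs.
rewrite spectral_addmx_scalar ?unitarymx_unit // dotmx_spectral // lt_geF //.
rewrite -oppr_gt0 -sumrN; under eq_bigr do rewrite -mulNr.
apply: sum_weighted_sqr_gt0 => // j w_j.
have : j \in J by apply: contraNT w_j => /v_J ->.
by rewrite inE !mxE oppr_gt0 -(addNr c) ltrD2r.
Qed.

Lemma card_eig_gt_le n (P : 'M[C]_n) (d : 'rV[C]_n) (c : C) (cs : seq 'cV[C]_n) :
  P \is unitarymx ->
  (forall v, (forall x, x \in cs -> v *m x = 0) ->
     dotmx (v *m (invmx P *m diag_mx d *m P + c%:M)) v <= 0) ->
  (#|[set j | (- c < d 0 j)%R]| <= size cs)%N.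
Proof.
move=> P_unitary form_le0; set J := [set j | - c < d 0 j].
rewrite leqNgt; apply/negP => lt_cs_J.
have [|v [v_cs v_J w_neq0]] := exists_annihilator_in_eigenspan (J := J) (cs := cs) P_unitary.
  by rewrite -[n in (_ < n)%N]card_ord -(cardsC J) addnC ltn_add2r.
have := form_le0 v v_cs.
rewrite spectral_addmx_scalar ?unitarymx_unit // dotmx_spectral // lt_geF //.
apply: sum_weighted_sqr_gt0 => // j w_j.
have : j \in J by apply: contraNT w_j => /v_J ->.
by rewrite inE !mxE -(addNr c) ltrD2r.
Qed.

Lemma perm_spectral_diag n (A : 'M[C]_n) (s : seq C) :
  A \is normalmx -> char_poly A = \prod_(x <- s) ('X - x%:P) ->
  perm_eq s [seq spectral_diag A 0 j | j <- enum 'I_n].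
Proof.
move=> /orthomx_spectralP defA char_s; apply: prod_XsubC_eq.
rewrite -char_s {1}defA char_poly_conj ?spectral_unit // char_poly_trig ?diag_mx_is_trig //.
by rewrite big_map big_enum /=; apply: eq_bigr => j _; rewrite mxE eqxx mulr1n.
Qed.

Lemma card_spectral_diag n (A : 'M[C]_n) (s : seq C) (Q : pred C) :
  A \is normalmx -> char_poly A = \prod_(x <- s) ('X - x%:P) ->
  #|[set j | Q (spectral_diag A 0 j)]| = count Q s.
Proof.
move=> A_normal char_s.
by rewrite (permP (perm_spectral_diag A_normal char_s)) count_map card_set_count.
Qed.

End Spectral.

Section CliquePartition.
Variables (n : nat) (e : rel 'I_n) (F : {set {set 'I_n}}).
Hypotheses (e_simple : simple_graph e) (F_partition : clique_partition e F).

Definition indicator_col (R : pzSemiRingType) (K : {set 'I_n}) : 'cV[R]_n :=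
  \col_u (u \in K)%:R.

Lemma card_cliques_through2 u u' :
  #|[set K in F | (u \in K) && (u' \in K)]| = if u == u' then clique_deg F u else e u u'.
Proof.
have [F_cliques F_unique] := F_partition.
have [<-|neq_uu'] := eqVneq u u'.
  by apply: eq_card => K; rewrite !inE andbb.
have [e_uu'|ne_uu'] := boolP (e u u').
  have [K0 [[K0_F u_K0 u'_K0] K0_unique]] := F_unique _ _ e_uu'.
  rewrite /= -(cards1 K0); apply: eq_card => K; rewrite !inE.
  apply/idP/eqP => [/and3P[K_F u_K u'_K]|->]; last by rewrite K0_F u_K0 u'_K0.
  by symmetry; apply: K0_unique.
apply/eqP; rewrite cards_eq0; apply/eqP/setP => K; rewrite !inE.
apply: contraNF ne_uu' => /and3P[K_F u_K u'_K].
exact: F_cliques K K_F u u' u_K u'_K neq_uu'.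
Qed.

Lemma adjmx_clique_partition (R : pzRingType) :
  adjmx R e = \sum_(K in F) indicator_col R K *m (indicator_col R K)^T
              - diag_mx (\row_u (clique_deg F u)%:R).
Proof.
apply/matrixP => u u'; rewrite !mxE summxE.
under eq_bigr do rewrite mxE big_ord1 !mxE -natrM.
have -> : \sum_(K in F) ((u \in K) * (u' \in K))%:R =
    (#|[set K in F | (u \in K) && (u' \in K)]|)%:R :> R.
  rewrite -sum1_card natr_sum big_mkcond [RHS]big_mkcond /=.
  by apply: eq_bigr => K _; rewrite !inE; case: (K \in F); case: (u \in K); case: (u' \in K).
rewrite card_cliques_through2; have [<-|_] := eqVneq u u'; last by rewrite subr0.
by rewrite (negbTE (proj2 e_simple u)) subrr.
Qed.

Variable C : numClosedFieldType.
Local Open Scope sesquilinear_scope.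

Lemma adjmx_normal : adjmx C e \is normalmx.
Proof.
have adj_sym : (adjmx C e)^t* = adjmx C e.
  by apply/matrixP => u u'; rewrite !mxE conjC_nat (proj1 e_simple).
by apply/normalmxP; rewrite adj_sym.
Qed.

Lemma dotmx_adjmx_addmx_scalar (c : C) (v : 'rV[C]_n) :
  dotmx (v *m (adjmx C e + c%:M)) v =
  \sum_(K in F) `|(v *m indicator_col C K) 0 0| ^+ 2
  + \sum_u (c - (clique_deg F u)%:R) * `|v 0 u| ^+ 2.
Proof.
have -> : adjmx C e + c%:M = \sum_(K in F) indicator_col C K *m (indicator_col C K)^T
                             + diag_mx (\row_u (c - (clique_deg F u)%:R)).
  rewrite adjmx_clique_partition -addrA; congr (_ + _).
  apply/matrixP => u u'; rewrite !mxE.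
  by case: (u == u'); rewrite /= ?mulr1n ?mulr0n ?oppr0 ?addr0 // addrC.
rewrite mulmxDr linearDl /= dotmx_diag mulmx_sumr linear_sumlz /=.
congr (_ + _); last by apply: eq_bigr => u _; rewrite mxE.
apply: eq_bigr => K _.
rewrite mulmxA dotmx_mulmxl -dotmx_rV1; congr (dotmx _ (v *m _)).
by apply/matrixP => u i; rewrite !mxE conjC_nat.
Qed.

Lemma card_eig_lt_clique_deg (P : 'M[C]_n) (d : 'rV[C]_n) (c : nat) :
  P \is unitarymx -> adjmx C e = invmx P *m diag_mx d *m P ->
  (#|[set j | (d 0 j < - c%:R)%R]| + #|[set u | clique_deg F u <= c]| <= n)%N.
Proof.
move=> P_unitary defA; set S := [set u | (clique_deg F u <= c)%N].
have := card_eig_lt_le (c := c%:R)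
  (cs := [seq col u (1%:M : 'M[C]_n) | u <- enum (~: S)]) P_unitary.
rewrite size_map -cardE -[n in (_ <= n)%N]card_ord -(cardsC S) addnC leq_add2l.
apply=> v v_ann; rewrite -defA dotmx_adjmx_addmx_scalar.
apply: addr_ge0; first by apply: sumr_ge0 => K _; exact: exprn_ge0.
apply: sumr_ge0 => u _; have [u_S|u_nS] := boolP (u \in S).
  by rewrite inE in u_S; rewrite mulr_ge0 ?exprn_ge0 // subr_ge0 ler_nat.
have /matrixP/(_ 0 0) : v *m col u 1%:M = 0.
  by apply: v_ann; apply: map_f; rewrite mem_enum inE.
by rewrite colE mul1mx -colE !mxE => ->; rewrite normr0 expr0n mulr0.
Qed.

Lemma card_eig_gt_clique_deg (P : 'M[C]_n) (d : 'rV[C]_n) (t : nat) :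
  P \is unitarymx -> adjmx C e = invmx P *m diag_mx d *m P ->
  (forall u, t <= clique_deg F u)%N -> (#|[set j | (- t%:R < d 0 j)%R]| <= #|F|)%N.
Proof.
move=> P_unitary defA t_le_deg.
have := card_eig_gt_le (c := t%:R) (cs := [seq indicator_col C K | K <- enum F]) P_unitary.
rewrite size_map -cardE; apply=> v v_ann; rewrite -defA dotmx_adjmx_addmx_scalar.
rewrite big1 ?add0r => [|K K_F]; last first.
  by rewrite v_ann ?mxE ?normr0 ?expr0n //; apply: map_f; rewrite mem_enum.
by apply: sumr_le0 => u _; rewrite mulr_le0_ge0 ?exprn_ge0 // subr_le0 ler_nat.
Qed.

End CliquePartition.

Lemma map_adjmx (R S : pzRingType) (f : {rmorphism R -> S}) n (e : rel 'I_n) :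
  map_mx f (adjmx R e) = adjmx S e.
Proof. by apply/matrixP => u u'; rewrite !mxE rmorph_nat. Qed.

Section CliqueDegrees.
Variables (n : nat) (F : {set {set 'I_n}}).

Lemma size_clique_degs : size (clique_degs F) = n.
Proof. by rewrite size_sort size_map size_enum_ord. Qed.

Lemma sorted_clique_degs : sorted geq (clique_degs F).
Proof. by apply: sort_sorted => a b; exact: leq_total. Qed.

Lemma count_clique_degs (Q : pred nat) :
  count Q (clique_degs F) = #|[set u | Q (clique_deg F u)]|.
Proof. by rewrite (permP (permEl (perm_sort _ _))) count_map card_set_count. Qed.

Lemma nth_clique_degs_regular k u : clique_regular F -> (k < n)%N ->
  nth 0%N (clique_degs F) k = clique_deg F u.
Proof.
move=> F_regular lt_k.
have : nth 0%N (clique_degs F) k \in clique_degs F by rewrite mem_nth ?size_clique_degs.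
by rewrite mem_sort => /mapP[v _ ->]; exact: F_regular.
Qed.

End CliqueDegrees.

Section RealSpectrum.
Variables (R : rcfType) (n : nat) (e : rel 'I_n) (F : {set {set 'I_n}}) (s : seq R).
Hypotheses (e_simple : simple_graph e) (F_partition : clique_partition e F)
  (s_spectrum : sorted_spectrum (adjmx R e) s).

(* The spectral theorem is available over a numClosedFieldType only, hence the
   detour through the complexification of the adjacency matrix. *)
Let A := adjmx (complex R) e.
Let P := spectralmx A.
Let d := spectral_diag A.

Let P_unitary : P \is unitarymx.
Proof. exact: spectral_unitarymx. Qed.

Let defA : A = invmx P *m diag_mx d *m P.
Proof. exact/orthomx_spectralP/adjmx_normal. Qed.

Let card_eig (Q : pred R) (Q' : pred (complex R)) :
  (forall x, Q' x%:C%C = Q x) -> #|[set j | Q' (d 0 j)]| = count Q s.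
Proof.
have [_ char_s _] := s_spectrum.
move=> QQ'; rewrite (card_spectral_diag (s := map (real_complex R) s)) ?adjmx_normal //.
  by rewrite count_map; apply: eq_count => x /=; rewrite QQ'.
by rewrite /A -(map_adjmx (real_complex R)) (char_poly_map_spectrum _ char_s).
Qed.

Lemma eig_ge_neg_clique_deg i : (0 < i <= n)%N ->
  - (nth 0%N (clique_degs F) i.-1)%:R <= nth 0 s (n - i).
Proof.
have [size_s _ sorted_s] := s_spectrum.
move=> /andP[i_gt0 le_i_n]; set c := nth 0%N (clique_degs F) i.-1.
rewrite leNgt; apply/negP => lt_eig.
have := card_eig_lt_clique_deg e_simple F_partition c P_unitary defA.
rewrite (@card_eig (< - c%:R) (< - c%:R)) => [|x]; last by rewrite /= -ltcR rmorphN rmorph_nat.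
have le_count_eig : (i <= count (< - c%:R) s)%N.
  have := sorted_count_ge_nth 0 (n - i) ge_trans lexx sorted_s.
  rewrite size_s subKn // => /leq_trans; apply; apply: sub_count => y /= le_y.
  exact: le_lt_trans le_y lt_eig.
have le_count_deg : (n - i.-1 <= #|[set u | (clique_deg F u <= c)%N]|)%N.
  rewrite -(count_clique_degs F (fun y => y <= c)%N) -{1}(size_clique_degs F).
  exact: (sorted_count_ge_nth (r := geq) 0%N i.-1 ge_trans leqnn (sorted_clique_degs F)).
move=> /(leq_trans (leq_add le_count_eig le_count_deg)); lia.
Qed.

Lemma eig_le_neg_clique_deg_regular i :
  clique_regular F -> (neg_inertia s + #|F|)%N = n -> (0 < i <= neg_inertia s)%N ->
  nth 0 s (n - i) <= - (nth 0%N (clique_degs F) i.-1)%:R.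
Proof.
have [size_s _ sorted_s] := s_spectrum.
move=> F_regular nu_F /andP[i_gt0 le_i_nu].
have lt_i_n : (i.-1 < n)%N by rewrite prednK // -nu_F (leq_trans le_i_nu (leq_addr _ _)).
pose u0 : 'I_n := Ordinal (leq_ltn_trans (leq0n _) lt_i_n).
rewrite (nth_clique_degs_regular u0 F_regular lt_i_n); set t := clique_deg F u0.
rewrite leNgt; apply/negP => lt_eig.
have := card_eig_gt_clique_deg e_simple F_partition P_unitary defA
  (fun u => eq_leq (F_regular u0 u)).
rewrite (@card_eig (> - t%:R) (> - t%:R)) => [|x]; last by rewrite /= -ltcR rmorphN rmorph_nat.
have le_count_eig : ((n - i).+1 <= count (> - t%:R) s)%N.
  have lt_ni : (n - i < size s)%N by rewrite size_s; lia.
  apply: leq_trans (sorted_count_le_nth 0 ge_trans lexx sorted_s lt_ni) _.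
  by apply: sub_count => y /= le_y; exact: lt_le_trans lt_eig le_y.
move=> /(leq_trans le_count_eig); lia.
Qed.

End RealSpectrum.

Theorem mainTheorem5 (R : rcfType) (n : nat) (e : rel 'I_n) (F : {set {set 'I_n}})
    (s : seq R) :
  simple_graph e -> clique_partition e F ->
  sorted_spectrum (adjmx R e) s ->
  (forall i : nat, (1 <= i <= neg_inertia s)%N ->
     nth 0 s (n - i) >= - ((nth 0%N (clique_degs F) i.-1)%:R)) /\
  (clique_regular F -> (neg_inertia s + #|F|)%N = n ->
   forall i : nat, (1 <= i <= neg_inertia s)%N ->
     nth 0 s (n - i) = - ((nth 0%N (clique_degs F) i.-1)%:R)).
Proof.
move=> e_simple F_partition s_spectrum.
have le_nu_n : (neg_inertia s <= n)%N.
  by case: s_spectrum => size_s _ _; rewrite -size_s count_size.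
have lower i : (1 <= i <= neg_inertia s)%N ->
    - (nth 0%N (clique_degs F) i.-1)%:R <= nth 0 s (n - i).
  move=> /andP[i_gt0 le_i_nu].
  apply: (eig_ge_neg_clique_deg e_simple F_partition s_spectrum).
  by rewrite i_gt0 (leq_trans le_i_nu).
split=> // F_regular nu_F i le_i; apply/le_anti.
by rewrite lower // (eig_le_neg_clique_deg_regular e_simple F_partition s_spectrum).
Qed.
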